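(* For integers $n\ge 2$ and $k\ge 0$, let $$g^{(n-1)}_k(x)=\frac{\mathrm{Wr}\{\sin(\pi x),\sin(2\pi x),\dots,\sin((n-1)\pi x),\sin((n+k)\pi x)\}}{\mathrm{Wr}\{\sin(\pi x),\sin(2\pi x),\dots,\sin((n-1)\pi x)\}},\qquad x\in(0,1).$$ Then $$\int_0^1 \big(g^{(n-1)}_k(x)\big)^2\,dx=\frac{1}{2}\pi^{2n-2}\prod_{i=1}^{n-1}\big((n+k)^2-i^2\big)=\frac{\pi^{2n-2}\,\Gamma(2n+k)}{2\,(n+k)\,k!}.$$
   Context: For smooth functions $f_1,\dots,f_m$ of $x$, $\mathrm{Wr}\{f_1,\dots,f_m\}$ denotes the determinant of the $m\times m$ matrix with $(i,j)$ entry $f_j^{(i-1)}(x)$, derivatives taken with respect to $x$. *)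

From HB Require Import structures.
From mathcomp Require Import all_boot all_order all_algebra.
From mathcomp Require Import all_classical all_reals all_analysis.
Set Implicit Arguments. Unset Strict Implicit. Unset Printing Implicit Defensive.
Import Order.TTheory GRing.Theory Num.Theory.
Local Open Scope ring_scope.

Definition wronskian (R : realType) (m : nat) (f : 'I_m -> R -> R) (x : R) : R :=
  \det (\matrix_(i < m, j < m) derive1n i (f j) x).

Definition sin_family (R : realType) (n : nat) : 'I_n.-1 -> R -> R :=
  fun j x => sin ((j.+1)%:R * pi * x).

(* sin(pi x), ..., sin((n-1) pi x), sin((n+k) pi x) : n functions
   (for n >= 1, n.-1.+1 = n) *)
Definition sin_family_ext (R : realType) (n k : nat) : 'I_n.-1.+1 -> R -> R :=
  fun j x => if (j < n.-1)%N then sin ((j.+1)%:R * pi * x)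
             else sin ((n + k)%:R * pi * x).

Definition gfun (R : realType) (n k : nat) (x : R) : R :=
  wronskian (@sin_family_ext R n k) x / wronskian (@sin_family R n) x.

(* Since sin (j t) = sin t * U_(j-1) (cos t), every derivative of
   sin (w x) * P (cos (w x)) is a combination of the P^(l) (cos (w x)), l <= i,
   with diagonal coefficient sin (w x) (-w sin (w x))^i.  Hence each Wronskian
   matrix is a lower triangular times an upper triangular matrix, and the
   quotient of the two Wronskians is
     g(x) = sin (pi x) (-pi sin (pi x))^(n-1) U_(N-1)^(n-1) (cos (pi x)),  N = n + k.
   The derivatives y_m of U_(N-1) satisfy the Gegenbauer-type equation
     (1 - t^2) y_(m+2) = (2m+3) t y_(m+1) - (N^2 - (m+1)^2) y_m,
   which makes sin^(2m+3) (pi x) y_(m+1) y_m (cos (pi x)) a primitive relating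
   the integrals I_m of sin^(2m+2) (pi x) y_m (cos (pi x))^2 on [0, 1]:
   I_(m+1) = (N^2 - (m+1)^2) I_m, with I_0 = 1/2. *)

From HB Require Import structures.
From mathcomp Require Import all_boot all_order all_algebra.
From mathcomp Require Import all_classical all_reals all_analysis.
From mathcomp Require Import ring zify measurable_realfun.
Import Order.TTheory GRing.Theory Num.Theory.
Import numFieldNormedType.Exports.
Local Open Scope ring_scope.

Lemma derivn_size_le (R : nzRingType) (p : {poly R}) j :
  (size p <= j.+1)%N -> p^`(j) = (p`_j *+ j`!)%:P.
Proof.
move=> sp; apply/polyP => i; rewrite coef_derivn coefC.
case: i => [|i]; first by rewrite addn0 ffactnn.
by rewrite (leq_sizeP _ _ sp) ?mul0rn // addnS ltnS leq_addr.
Qed.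

Section Chebyshev.
Context {R : comNzRingType}.

(* [chebT j] and [chebS j] are the Chebyshev polynomials T_j and U_(j-1) (see
   [cheb_trig]); the recursion is the angle-addition formula. *)
Fixpoint cheb (j : nat) : {poly R} * {poly R} :=
  if j is j'.+1 then
    let p := cheb j' in ('X * p.1 - (1 - 'X^2) * p.2, p.1 + 'X * p.2)
  else (1, 0).

Definition chebT j := (cheb j).1.
Definition chebS j := (cheb j).2.

Lemma chebTS j : chebT j.+1 = 'X * chebT j - (1 - 'X^2) * chebS j.
Proof. by []. Qed.

Lemma chebSS j : chebS j.+1 = chebT j + 'X * chebS j.
Proof. by []. Qed.

Lemma deriv_cheb j : (chebT j)^`() = j%:R * chebS j /\
  (1 - 'X^2) * (chebS j)^`() = 'X * chebS j - j%:R * chebT j.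
Proof.
elim: j => [|j [dT dS]]; first by rewrite /chebT /chebS /= derivC deriv0; split; ring.
rewrite chebTS chebSS !poly.derivE /= dT; split; first by rewrite ?poly.derivE /= dS; ring.
transitivity ((1 - 'X^2) * (j%:R * chebS j + chebS j)
              + 'X * ((1 - 'X^2) * (chebS j)^`())); first by rewrite ?poly.derivE; ring.
by rewrite dS; ring.
Qed.

Lemma chebS_derivn_ode N m : (1 - 'X^2) * (chebS N)^`(m.+2) =
  (2 * m + 3)%:R * 'X * (chebS N)^`(m.+1)
  - (N%:R ^+ 2 - m.+1%:R ^+ 2) * (chebS N)^`(m).
Proof.
elim: m => [|m IH].
  have [dT dS] := deriv_cheb N.
  rewrite !derivnS derivn0.
  have := congr1 (@deriv _) dS; rewrite !poly.derivE /= dT => E.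
  transitivity (((0 - 'X^1 *+ 2) * (chebS N)^`() + (1 - 'X^2) * (chebS N)^`()^`())
    + 'X^1 *+ 2 * (chebS N)^`()); first ring.
  by rewrite E; ring.
have := congr1 (@deriv _) IH; rewrite !poly.derivE /= -!derivnS => E.
transitivity (((0 - 'X^1 *+ 2) * (chebS N)^`(m.+2) + (1 - 'X^2) * (chebS N)^`(m.+3))
  + 'X^1 *+ 2 * (chebS N)^`(m.+2)); first ring.
by rewrite E; ring.
Qed.

Lemma coef_chebS j i : (chebS j.+1)`_i = (chebT j)`_i + (chebS j)`_i.-1 *+ (i != 0).
Proof. by rewrite chebSS coefD coefXM; case: i. Qed.

Lemma coef_chebT j i : (chebT j.+1)`_i =
  (chebT j)`_i.-1 *+ (i != 0) - (chebS j)`_i + (chebS j)`_(i - 2) *+ (1 < i).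
Proof.
rewrite chebTS mulrBl mul1r coefB coefXM coefB coefXnM.
by case: i => [|[|i]] //=; rewrite ?mulr1n ?mulr0n ?subr0 ?add0r ?addr0 ?opprB ?opprK; ring.
Qed.

Lemma size_cheb j : (size (chebS j) <= j)%N /\ (size (chebT j) <= j.+1)%N.
Proof.
elim: j => [|j [sS sT]]; first by rewrite /chebS /chebT /= size_poly0 size_poly1.
split; apply/leq_sizeP => i hi.
  rewrite coef_chebS (leq_sizeP _ _ sT) ?add0r //.
  by case: i hi => // i hi; rewrite (leq_sizeP _ _ sS) ?mul0rn.
case: i hi => [|[|i]] // hi.
rewrite coef_chebT /= subn2 /= !(leq_sizeP _ _ sS) ?(leq_sizeP _ _ sT) //.
  by rewrite !mul0rn subr0 addr0.
by move: hi; rewrite !ltnS => /leqW/leqW.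
Qed.

Lemma lead_cheb j : (chebS j.+1)`_j = 2 ^+ j /\ (chebT j.+1)`_j.+1 = 2 ^+ j.
Proof.
elim: j => [|j [lS lT]]; first by rewrite /chebS /chebT /= !coefE /=; split; ring.
have [sS _] := size_cheb j.+1.
rewrite (coef_chebS j.+1 j.+1) (coef_chebT j.+1 j.+2) /= (leq_sizeP _ _ sS j.+2) //.
by rewrite subn2 lS lT exprS; split; ring.
Qed.

Lemma derivn_chebS_gt j l : (j < l)%N -> (chebS j.+1)^`(l) = 0.
Proof. by move=> jl; apply: derivn_poly0; apply: leq_trans jl; case: (size_cheb j.+1). Qed.

Lemma derivn_chebS_diag j : (chebS j.+1)^`(j) = (2 ^+ j *+ j`!)%:P.
Proof. by rewrite derivn_size_le; [case: (lead_cheb j) => -> | case: (size_cheb j.+1)]. Qed.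

End Chebyshev.

Lemma cheb_trig {R : realType} j (t : R) :
  cos (j%:R * t) = (chebT j).[cos t] /\ sin (j%:R * t) = sin t * (chebS j).[cos t].
Proof.
elim: j => [|j [cT sS]]; first by rewrite /chebT /chebS /= !mul0r cos0 sin0 !hornerE; split; ring.
rewrite chebTS chebSS -addn1 natrD mulrDl mul1r cosD sinD cT sS !hornerE.
split; last by ring.
by rewrite -(sin2cos2 t) !expr2; ring.
Qed.

Section ScalarDerivatives.
Context {R : realType}.
Implicit Types (f g : R -> R) (a x df dg : R).

Lemma is_derive_mulf {f g x df dg} : is_derive x 1 f df -> is_derive x 1 g dg ->
  is_derive x 1 (fun y => f y * g y) (f x * dg + g x * df).
Proof. exact: is_deriveM. Qed.

Lemma is_derive_addf {f g x df dg} : is_derive x 1 f df -> is_derive x 1 g dg ->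
  is_derive x 1 (fun y => f y + g y) (df + dg).
Proof. exact: is_deriveD. Qed.

Lemma is_derive_scalef {f x df} c : is_derive x 1 f df ->
  is_derive x 1 (fun y => c * f y) (c * df).
Proof. exact: is_deriveZ. Qed.

Lemma is_derive_exprnf {f x df} n : is_derive x 1 f df ->
  is_derive x 1 (fun y => f y ^+ n) (n%:R * f x ^+ n.-1 * df).
Proof. by move=> fdf; rewrite -exprfctE; exact: is_deriveX. Qed.

Lemma is_derive_scale a x : is_derive x 1 (fun y => a * y) a.
Proof. by rewrite -[X in is_derive _ _ _ X]mulr1; exact: is_deriveZ. Qed.

Lemma is_derive_sin_scale a x : is_derive x 1 (fun y => sin (a * y)) (cos (a * x) * a).
Proof. exact: (is_derive1_comp (is_derive_sin _) (is_derive_scale a x)). Qed.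

Lemma is_derive_cos_scale a x : is_derive x 1 (fun y => cos (a * y)) (- sin (a * x) * a).
Proof. exact: (is_derive1_comp (is_derive_cos _) (is_derive_scale a x)). Qed.

Lemma is_derive_horner_cos (q : {poly R}) a x :
  is_derive x 1 (fun y => q.[cos (a * y)]) (q^`().[cos (a * x)] * (- sin (a * x) * a)).
Proof. exact: (is_derive1_comp (is_derive_poly _ _) (is_derive_cos_scale a x)). Qed.

End ScalarDerivatives.

Section SinPoly.
Context {R : realType} (w : R).
Implicit Types (p q : {poly R} * {poly R}) (x : R).

(* A pair p encodes the function sin (w x) p.1 (cos (w x)) + p.2 (cos (w x)).
   This class is closed under derivation ([sc_deriv]) and under multiplication
   by - w sin (w x) ([sc_mulsin]). *)
Definition sc_eval p x := sin (w * x) * p.1.[cos (w * x)] + p.2.[cos (w * x)].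

Definition sc_deriv p :=
  (- w%:P * p.2^`(), w%:P * ('X * p.1 - (1 - 'X^2) * p.1^`())).

Definition sc_mulsin p := (- w%:P * p.2, - w%:P * (1 - 'X^2) * p.1).

(* The coefficient of P^(l) (cos (w x)) in the i-th derivative of
   sin (w x) P (cos (w x)), see [derive1n_sin_horner]. *)
Fixpoint dcoef (i l : nat) : {poly R} * {poly R} :=
  if i is i'.+1 then
    sc_deriv (dcoef i' l) + (if l is l'.+1 then sc_mulsin (dcoef i' l') else 0)
  else if l == 0%N then (1, 0) else 0.

Lemma sc_evalD p q x : sc_eval (p + q) x = sc_eval p x + sc_eval q x.
Proof.
(* Simplification would unfold the pair addition into a form [ring] rejects. *)
rewrite /sc_eval.
have -> : (p + q).1 = p.1 + q.1 by [].
have -> : (p + q).2 = p.2 + q.2 by [].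
by rewrite !hornerD; ring.
Qed.

Lemma sc_eval0 x : sc_eval 0 x = 0.
Proof. by rewrite /sc_eval /= !horner0 mulr0 addr0. Qed.

Lemma sc_deriv0 : sc_deriv 0 = 0.
Proof. by rewrite /sc_deriv /= deriv0 !mulr0 subr0 mulr0. Qed.

Lemma sc_mulsin0 : sc_mulsin 0 = 0.
Proof. by rewrite /sc_mulsin /= !mulr0. Qed.

Lemma sc_eval_mulsin p x : sc_eval (sc_mulsin p) x = - w * sin (w * x) * sc_eval p x.
Proof.
rewrite /sc_eval /sc_mulsin /= !(hornerM, hornerN, hornerD, hornerC, hornerX, hornerXn).
by rewrite -(sin2cos2 (w * x)) !expr2; ring.
Qed.

Lemma is_derive_sc_eval p x : is_derive x 1 (sc_eval p) (sc_eval (sc_deriv p) x).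
Proof.
have := is_derive_addf (is_derive_mulf (is_derive_sin_scale w x)
  (is_derive_horner_cos p.1 w x)) (is_derive_horner_cos p.2 w x).
move=> H; apply: (is_derive_eq H).
rewrite /sc_eval /sc_deriv /= !(hornerM, hornerN, hornerD, hornerC, hornerX, hornerXn).
transitivity (sin (w * x) ^+ 2 * (- w * p.1^`().[cos (w * x)])
  + sin (w * x) * (- w * p.2^`().[cos (w * x)])
  + w * cos (w * x) * p.1.[cos (w * x)]); first ring.
by rewrite sin2cos2; ring.
Qed.

Lemma dcoef_gt i l : (i < l)%N -> dcoef i l = 0.
Proof.
elim: i l => [|i IH] [|l] // il /=.
by rewrite !IH ?sc_deriv0 ?sc_mulsin0 ?addr0 // ltnW.
Qed.

Lemma sc_eval_dcoef_diag i x :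
  sc_eval (dcoef i i) x = sin (w * x) * (- w * sin (w * x)) ^+ i.
Proof.
elim: i => [|i IH]; first by rewrite /sc_eval /= !(hornerC, horner0) mulr1 addr0.
by rewrite /= dcoef_gt // sc_deriv0 sc_evalD sc_eval0 add0r sc_eval_mulsin IH exprS; ring.
Qed.

Lemma derive1n_sin_horner (P : {poly R}) i K x : (i < K)%N ->
  derive1n i (fun y => sin (w * y) * P.[cos (w * y)]) x =
  \sum_(l < K) sc_eval (dcoef i l) x * (P^`(l)).[cos (w * x)].
Proof.
elim: i K x => [|i IH] K x iK.
  case: K iK => // K _; rewrite big_ord_recl big1 => [|l _]; last by rewrite sc_eval0 mul0r.
  by rewrite /sc_eval /= !(hornerC, horner0) mulr1 !addr0.
have -> : derive1n i.+1 (fun y => sin (w * y) * P.[cos (w * y)]) =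
    derive1 (fun y => \sum_(l < K) sc_eval (dcoef i l) y * (P^`(l)).[cos (w * y)]).
  by rewrite derive1nS; congr derive1; apply/funext => y; rewrite (IH K) // ltnW.
have := is_derive_sum (fun l : 'I_K =>
  is_derive_mulf (is_derive_sc_eval (dcoef i l) x) (is_derive_horner_cos (P^`(l)) w x)).
rewrite fct_sumE => D; rewrite derive1E derive_val.
under [RHS]eq_bigr do rewrite /= sc_evalD mulrDl.
rewrite !big_split /= addrC; congr (_ + _); first by apply: eq_bigr => l _; ring.
case: K iK {IH D} => // K iK.
rewrite [RHS]big_ord_recl sc_eval0 mul0r add0r big_ord_recr /= dcoef_gt // sc_eval0 mul0r addr0.
by apply: eq_bigr => l _; rewrite sc_eval_mulsin -derivnS; ring.
Qed.

(* The Wronskian matrix is the product of the lower triangular matrix of the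
   [dcoef i l] with the upper triangular matrix of the P_j^(l) (cos (w x)). *)
Lemma wronskian_sin_horner m (P : 'I_m -> {poly R}) x :
  (forall j l : 'I_m, (j < l)%N -> (P j)^`(l) = 0) ->
  wronskian (fun j y => sin (w * y) * (P j).[cos (w * y)]) x =
  (\prod_(i < m) (sin (w * x) * (- w * sin (w * x)) ^+ i)) *
  \prod_(j < m) ((P j)^`(j)).[cos (w * x)].
Proof.
move=> P_triu; rewrite /wronskian.
pose A := \matrix_(i < m, l < m) sc_eval (dcoef i l) x.
pose Q := \matrix_(l < m, j < m) ((P j)^`(l)).[cos (w * x)].
have -> : \matrix_(i < m, j < m)
    derive1n i (fun y => sin (w * y) * (P j).[cos (w * y)]) x = A *m Q.
  apply/matrixP => i j; rewrite !mxE (derive1n_sin_horner _ _ _ _ (ltn_ord i)).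
  by apply: eq_bigr => l _; rewrite !mxE.
rewrite det_mulmx det_trig; last first.
  by apply/is_trig_mxP => i l il; rewrite mxE dcoef_gt // sc_eval0.
rewrite -det_tr det_trig; last first.
  by apply/is_trig_mxP => i l il; rewrite !mxE P_triu // horner0.
by congr (_ * _); apply: eq_bigr => i _; rewrite !mxE ?sc_eval_dcoef_diag.
Qed.

End SinPoly.

Section SineWronskians.
Context {R : realType}.

Lemma sin_natmul_pi j (y : R) : sin (j%:R * pi * y) = sin (pi * y) * (chebS j).[cos (pi * y)].
Proof. by rewrite -mulrA; case: (cheb_trig j (pi * y)). Qed.

Lemma sin_pi_gt0 (x : R) : 0 < x < 1 -> 0 < sin (pi * x).
Proof. by case/andP=> x0 x1; apply: sin_gt0_pi; rewrite mulr_gt0 ?pi_gt0 //= gtr_pMr ?pi_gt0. Qed.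

Lemma wronskian_sin_family_ext m k (x : R) :
  wronskian (@sin_family_ext R m.+1 k) x =
  (\prod_(i < m.+1) (sin (pi * x) * (- pi * sin (pi * x)) ^+ i)) *
  \prod_(j < m.+1)
    ((if (j < m)%N then chebS j.+1 else chebS (m.+1 + k))^`(j)).[cos (pi * x)].
Proof.
rewrite -wronskian_sin_horner => [|j l jl].
  congr wronskian; apply/funext => j; apply/funext => y.
  by rewrite /sin_family_ext /=; case: ifP => _; rewrite sin_natmul_pi.
case: ifP => jm; first exact: derivn_chebS_gt.
by have := ltn_ord l; rewrite ltnS leqNgt (leq_trans _ jl) // ltnS leqNgt jm.
Qed.

Lemma wronskian_sin_family m (x : R) :
  wronskian (@sin_family R m.+1) x =
  (\prod_(i < m) (sin (pi * x) * (- pi * sin (pi * x)) ^+ i)) *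
  \prod_(j < m) ((chebS j.+1)^`(j)).[cos (pi * x)].
Proof.
rewrite -wronskian_sin_horner => [|j l]; last exact: derivn_chebS_gt.
by congr wronskian; apply/funext => j; apply/funext => y; rewrite /sin_family sin_natmul_pi.
Qed.

Lemma gfunE m k (x : R) : 0 < x < 1 ->
  gfun m.+1 k x =
  sin (pi * x) * (- pi * sin (pi * x)) ^+ m * ((chebS (m.+1 + k))^`(m)).[cos (pi * x)].
Proof.
move=> /sin_pi_gt0 s_gt0.
rewrite /gfun wronskian_sin_family_ext wronskian_sin_family !big_ord_recr /= ltnn.
set D := \prod_(i < m) _; set C' := \prod_(i < m) _; set C := \prod_(i < m) _.
have -> : C' = C by apply: eq_bigr => i _; rewrite ltn_ord.
have DC_neq0 : D * C != 0.
  rewrite mulf_neq0 //; apply/prodf_neq0 => i _.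
    by rewrite mulf_neq0 ?expf_neq0 ?mulf_neq0 ?oppr_eq0 ?gt_eqF ?pi_gt0.
  by rewrite derivn_chebS_diag hornerC mulrn_eq0 negb_or expf_neq0 ?pnatr_eq0 // -lt0n fact_gt0.
set e := _ * _ ^+ m; set q := _.[_].
by rewrite [D * e * _](_ : _ = (e * q) * (D * C)) ?mulfK //; ring.
Qed.

End SineWronskians.

Section Integrals.
Context {R : realType}.
Implicit Types (N m : nat) (x : R).

Definition sin_chebS_sq N m x :=
  sin (pi * x) ^+ (2 * m).+2 * ((chebS N)^`(m)).[cos (pi * x)] ^+ 2.

(* By [chebS_derivn_ode] the derivative of this boundary term links consecutive
   [sin_chebS_sq]; it vanishes at 0 and 1. *)
Definition chebS_flux N m x := sin (pi * x) ^+ (2 * m).+3 *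
  ((chebS N)^`(m.+1)).[cos (pi * x)] * ((chebS N)^`(m)).[cos (pi * x)].

Lemma is_derive_chebS_flux N m x : is_derive x 1 (chebS_flux N m)
  (pi * ((N%:R ^+ 2 - m.+1%:R ^+ 2) * sin_chebS_sq N m x - sin_chebS_sq N m.+1 x)).
Proof.
have := is_derive_mulf (is_derive_mulf (is_derive_exprnf (2 * m).+3 (is_derive_sin_scale pi x))
  (is_derive_horner_cos ((chebS N)^`(m.+1)) pi x)) (is_derive_horner_cos ((chebS N)^`(m)) pi x).
move=> D; apply: (is_derive_eq D).
have ode := congr1 (horner^~ (cos (pi * x))) (chebS_derivn_ode N m); cbv beta in ode.
rewrite !(hornerM, hornerN, hornerD, hornerC, hornerX, hornerXn, hornerMn) in ode.
rewrite /sin_chebS_sq -!derivnS mulnS !exprS.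
set s := sin (pi * x); set c := cos (pi * x); set S := s ^+ (2 * m).
set y0 := _^`(m).[c]; set y1 := _^`(m.+1).[c]; set y2 := _^`(m.+2).[c].
have sc : s * s = 1 - c * c by rewrite -!expr2 sin2cos2.
apply/eqP; rewrite -subr_eq0; apply/eqP.
transitivity (- pi * (s * s * S * y0) * ((s * s) * y2 -
   ((2 * m + 3)%:R * c * y1 - (N%:R * N%:R - m.+1%:R * m.+1%:R) * y0))); first ring.
by rewrite sc ode subrr mulr0.
Qed.

Lemma is_derive_sin_sqr_primitive (b x : R) : b != 0 ->
  is_derive x 1 (fun y => 2^-1 * y - (4 * b)^-1 * sin (2 * b * y)) (sin (b * x) ^+ 2).
Proof.
move=> b_neq0.
have := is_deriveB (is_derive_scale 2^-1 x)
  (is_derive_scalef (4 * b)^-1 (is_derive_sin_scale (2 * b) x)).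
move=> D; apply: (is_derive_eq D).
have -> : 2 * b * x = b * x + b * x by ring.
rewrite cosD -!expr2 cos2sin2 /=.
by field; rewrite b_neq0.
Qed.

Lemma sin_chebS_sq_primitive N m : (0 < N)%N ->
  exists2 H : R -> R, (forall x, is_derive x 1 H (sin_chebS_sq N m x))
    & H 1 - H 0 = 2^-1 * \prod_(i < m) (N%:R ^+ 2 - i.+1%:R ^+ 2).
Proof.
move=> N_gt0; have pi_neq0 : pi != 0 :> R by rewrite gt_eqF ?pi_gt0.
elim: m => [|m [H dH H10]].
  have Npi_neq0 : N%:R * pi != 0 :> R by rewrite mulf_neq0 // pnatr_eq0 -lt0n.
  exists (fun y => 2^-1 * y - (4 * (N%:R * pi))^-1 * sin (2 * (N%:R * pi) * y)).
    move=> x; rewrite /sin_chebS_sq muln0 derivn0 -exprMn -sin_natmul_pi.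
    exact: is_derive_sin_sqr_primitive.
  have := sin_natmul_pi (2 * N)%N (1 : R); rewrite natrM -!mulrA !mulr1 sinpi mul0r => ->.
  by rewrite big_ord0 !mulr0 sin0 !mulr1; ring.
pose lam : R := N%:R ^+ 2 - m.+1%:R ^+ 2.
exists (fun y => lam * H y - pi^-1 * chebS_flux N m y).
  move=> x; have := is_deriveB (is_derive_scalef lam (dH x))
    (is_derive_scalef pi^-1 (is_derive_chebS_flux N m x)).
  by move=> D; apply: (is_derive_eq D); rewrite mulKf // subKr.
rewrite big_ord_recr /= -/lam /chebS_flux mulr0 mulr1 sin0 sinpi !expr0n /= !mul0r !mulr0 !subr0.
by rewrite -mulrBr H10; ring.
Qed.

End Integrals.

Local Open Scope classical_set_scope.

Section Integration.
Context {R : realType}.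

Lemma derivable_continuous (f : R -> R) : (forall x : R, derivable f x 1) -> continuous f.
Proof. by move=> df x; apply/differentiable_continuous/derivable1_diffP. Qed.

Lemma integral_itv_oo_primitive (f F : R -> R) (a b : R) : a < b -> continuous f ->
  (forall x : R, is_derive x 1 F (f x)) ->
  (\int[lebesgue_measure]_(x in `]a, b[) (f x)%:E = (F b - F a)%:E)%E.
Proof.
move=> ab cf dF.
have cF : continuous F by apply: derivable_continuous => x; case: (dF x).
rewrite -(@integral_itv_bndoo R a b _ true false); last first.
  by apply/measurable_EFinP/measurable_funTS; exact: continuous_measurable_fun.
rewrite (@continuous_FTC2 R f F) -?EFinB //.
- exact: continuous_subspaceT.
- split; first by move=> x _; case: (dF x).
    exact: cvg_at_right_filter (cF a).
  exact: cvg_at_left_filter (cF b).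
- by move=> x _; rewrite derive1E; case: (dF x).
Qed.

Lemma continuous_sin_chebS_sq N m : continuous (@sin_chebS_sq R N m).
Proof.
apply: derivable_continuous => x.
by case: (is_derive_mulf (is_derive_exprnf (2 * m).+2 (is_derive_sin_scale pi x))
  (is_derive_exprnf 2 (is_derive_horner_cos ((chebS N)^`(m)) pi x))).
Qed.

Lemma gfun_sqr m k (x : R) : 0 < x < 1 ->
  gfun m.+1 k x ^+ 2 = pi ^+ (2 * m) * sin_chebS_sq (m.+1 + k) m x.
Proof.
move=> x01; rewrite gfunE // /sin_chebS_sq !exprMn !(exprAC _ m 2) sqrrN.
by rewrite -[(2 * m).+2]addn2 exprD !exprM; ring.
Qed.

Lemma integral_gfun_sqr m k :
  (\int[@lebesgue_measure R]_(x in `]0%R, 1%R[) ((gfun m.+1 k x) ^+ 2)%:E =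
   (pi ^+ (2 * m) * (2^-1 * \prod_(i < m) ((m.+1 + k)%:R ^+ 2 - i.+1%:R ^+ 2)))%:E)%E.
Proof.
have [H dH <-] := @sin_chebS_sq_primitive R (m.+1 + k) m isT.
rewrite mulrBr.
transitivity (\int[@lebesgue_measure R]_(x in `]0%R, 1%R[)
    (pi ^+ (2 * m) * sin_chebS_sq (m.+1 + k) m x)%:E)%E.
  by apply: eq_integral => x; rewrite inE /= in_itv /= => x01; rewrite gfun_sqr.
apply: integral_itv_oo_primitive ltr01 _ (fun x => is_derive_scalef _ (dH x)).
by move=> x; apply: (@continuousM _ _ (cst _));
  [exact: cst_continuous | exact: continuous_sin_chebS_sq].
Qed.

End Integration.

Lemma prod_sqr_sub_fact (R : comNzRingType) m d :
  \prod_(i < m) ((m.+1 + d)%:R ^+ 2 - i.+1%:R ^+ 2) * (m.+1 + d)%:R * d`!%:R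
  = (m.+1 + d + m)`!%:R :> R.
Proof.
elim: m d => [|m IH] d; first by rewrite big_ord0 mul1r addn0 add1n factS natrM.
have := IH d.+1; rewrite big_ord_recr /= => E.
have -> : (m.+2 + d = m.+1 + d.+1)%N by rewrite addnS.
have -> : (m.+1 + d.+1 + m.+1 = (m.+1 + d.+1 + m).+1)%N by rewrite addnS.
by rewrite factS natrM -E factS natrM !natrD; ring.
Qed.

Theorem mainTheorem7 (R : realType) (n k : nat) (hn : (2 <= n)%N) :
  (\int[(@lebesgue_measure R)]_(x in `]0%R, 1%R[) ((@gfun R n k x) ^+ 2)%:E
     = (2^-1 * pi ^+ (2 * n - 2) *
        \prod_(1 <= i < n) ((n + k)%:R ^+ 2 - i%:R ^+ 2))%:E)%E
  /\ 2^-1 * pi ^+ (2 * n - 2) *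
        \prod_(1 <= i < n) ((n + k)%:R ^+ 2 - i%:R ^+ 2)
     = pi ^+ (2 * n - 2) * (2 * n + k - 1)`!%:R
       / (2 * (n + k)%:R * k`!%:R) :> R.
Proof.
case: n hn => [|m] // _.
have -> : (2 * m.+1 - 2 = 2 * m)%N by rewrite mulnS addKn.
rewrite big_add1 big_mkord /=; split.
  by rewrite integral_gfun_sqr; congr (_%:E); ring.
have -> : (2 * m.+1 + k - 1 = m.+1 + k + m)%N by lia.
rewrite -prod_sqr_sub_fact.
have : k`!%:R != 0 :> R by rewrite pnatr_eq0 -lt0n fact_gt0.
have : (m.+1 + k)%:R != 0 :> R by rewrite pnatr_eq0.
(* Generalized so that [field] keeps these denominators atomic. *)
move: (m.+1 + k)%:R (k`!%:R) => N K N_neq0 K_neq0.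
by field; rewrite N_neq0 K_neq0.
Qed.
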